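(* Let $\mu=\alpha_-\delta_{-\infty}+\alpha_0\mu_0+\alpha_+\delta_{+\infty}\in\mathcal{P}(\overline{\mathbb{Z}})$ with $\alpha_\sigma\ge0$, $\alpha_-+\alpha_0+\alpha_+=1$, $\mu_0\in\mathcal{P}(\mathbb{Z})$, and let $\varepsilon>0$. If $R\in\mathbb{N}$ satisfies $R>R_{\mu_0}(\varepsilon)$, then for all $n\in\mathbb{N}$ and all $w\in\Omega^{(0)}_n(\mu,2^{-R}\varepsilon)$, $$|N^\sigma(w)-\alpha_\sigma n|<2\varepsilon n\quad\text{for }\sigma\in\{-,0,+\},\qquad N_m(w)<3\varepsilon n\quad\text{for }m\in\{-R,-R+1,R-1,R\}.$$
   Context: $\overline{\mathbb{Z}}=\mathbb{Z}\cup\{\pm\infty\}$ with metric $d(h,k)=|\varphi(h)-\varphi(k)|$, $\varphi(\pm\infty)=\pm1$, $\varphi(k)=1-2^{-k}$ ($k\ge0$), $\varphi(k)=-1+2^{-|k|}$ ($k<0$). For signed measures, $\|\nu\|=\sup\{\int f\,d\nu: f\text{ 1-Lipschitz for }d,\ \sup|f|\le1\}$; $B(\mu,\varepsilon)=\{\nu\in\mathcal{P}(\overline{\mathbb{Z}}):\|\nu-\mu\|<\varepsilon\}$. $\Omega^{(0)}_n$ is the set of words $w=(w_1,\dots,w_n)\in\mathbb{Z}^n$ with $w_1=0$ and $|w_i-w_{i+1}|=1$ for all $i$; $\ell(w)=\frac1n\sum_{j=1}^n\delta_{w_j}$; $\Omega^{(0)}_n(\mu,\varepsilon)=\{w\in\Omega^{(0)}_n:\ell(w)\in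 B(\mu,\varepsilon)\}$. For $R\in\mathbb{N}$: $A^-=\{k\in\overline{\mathbb{Z}}:k\le-R\}$, $A^0=\{-R+1,\dots,R-1\}$, $A^+=\{k\in\overline{\mathbb{Z}}:k\ge R\}$. $N^\sigma(w)=\#\{j\le n:w_j\in A^\sigma\}$ and $N_m(w)=\#\{j\le n:w_j=m\}$. $R_{\mu_0}(\varepsilon)=\min\{R\in\mathbb{N}:\mu_0(\{-R+1,\dots,R-1\})>1-\varepsilon\}$. *)

From Stdlib Require Import Reals ZArith List.
From Coquelicot Require Import Coquelicot.
Open Scope R_scope.

Inductive zbar : Type := NegInf | Fin (k : Z) | PosInf.

Definition phi (h : zbar) : R :=
  match h with
  | NegInf => -1
  | PosInf => 1
  | Fin k => if Z.leb 0 k then 1 - / pow 2 (Z.to_nat k)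
             else -1 + / pow 2 (Z.to_nat (Z.abs k))
  end.

Definition dist (h k : zbar) : R := Rabs (phi h - phi k).

Definition admissible (f : zbar -> R) : Prop :=
  (forall h k, Rabs (f h - f k) <= dist h k) /\ (forall h, Rabs (f h) <= 1).

(* A signed measure nu is represented by its integration functional I f = ∫ f dnu;
   ||nu|| = sup { ∫ f dnu : f admissible }. *)
Definition dual_norm (I : (zbar -> R) -> R) : Rbar :=
  Lub_Rbar (fun x => exists f, admissible f /\ x = I f).

Definition pos_part (g : Z -> R) (n : nat) : R := g (Z.of_nat n).
Definition neg_part (g : Z -> R) (n : nat) : R := g (- Z.of_nat (S n))%Z.

Definition is_prob_Z (p : Z -> R) : Prop :=
  (forall k, 0 <= p k) /\
  exists a b, is_series (pos_part p) a /\ is_series (neg_part p) b /\ a + b = 1.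

Definition int_Z (p : Z -> R) (g : Z -> R) : R :=
  Series (pos_part (fun k => p k * g k)) + Series (neg_part (fun k => p k * g k)).

Definition int_mu (am a0 ap : R) (p : Z -> R) (f : zbar -> R) : R :=
  am * f NegInf + a0 * int_Z p (fun k => f (Fin k)) + ap * f PosInf.

Definition int_ell (w : list Z) (f : zbar -> R) : R :=
  / INR (length w) * fold_right Rplus 0 (map (fun z => f (Fin z)) w).

Fixpoint steps_pm1 (w : list Z) : Prop :=
  match w with
  | x :: ((y :: _) as t) => Z.abs (x - y) = 1%Z /\ steps_pm1 t
  | _ => True
  end.

Definition Omega0 (n : nat) (w : list Z) : Prop :=
  length w = n /\ hd_error w = Some 0%Z /\ steps_pm1 w.

Definition Omega0_ball (n : nat) (am a0 ap : R) (p : Z -> R) (eps : R) (w : list Z)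
  : Prop :=
  Omega0 n w /\
  Rbar_lt (dual_norm (fun f => int_ell w f - int_mu am a0 ap p f)) (Finite eps).

(* mu0({-R+1, ..., R-1}) *)
Definition mass0 (p : Z -> R) (R0 : nat) : R :=
  fold_right Rplus 0
    (map (fun i => p (Z.of_nat i - Z.of_nat R0 + 1)%Z) (seq 0 (2 * R0 - 1))).

Definition is_Rmu0 (p : Z -> R) (eps : R) (r : nat) : Prop :=
  mass0 p r > 1 - eps /\ (forall r', (r' < r)%nat -> mass0 p r' <= 1 - eps).

Definition cnt_minus (R0 : nat) (w : list Z) : nat :=
  length (filter (fun z => Z.leb z (- Z.of_nat R0)) w).
Definition cnt_zero (R0 : nat) (w : list Z) : nat :=
  length (filter (fun z => andb (Z.leb (- Z.of_nat R0 + 1) z) (Z.leb z (Z.of_nat R0 - 1))) w).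
Definition cnt_plus (R0 : nat) (w : list Z) : nat :=
  length (filter (fun z => Z.leb (Z.of_nat R0) z) w).
Definition cnt_m (m : Z) (w : list Z) : nat :=
  length (filter (fun z => Z.eqb z m) w).

From Pilot Require Import Defs.
From Stdlib Require Import Reals ZArith List Bool Lra Lia.
From Coquelicot Require Import Coquelicot.
Open Scope R_scope.

(* A count N_B(w) is n times the integral of the indicator of a set B of Zbar
   against l(w).  For the four kinds of sets used here ({k <= -R}, {|k| < R},
   {k >= R} and a point {m} with R - 1 <= |m| <= R), phi keeps B at distance at
   least c from its complement, with c = 2^-R, resp. 2^-(R+1) for a point; so
   c 1_B is an admissible test function, and ||l(w) - mu|| < 2^-R eps yields
   |N_B(w)/n - mu(B)| < 2^-R eps / c.  Finally mu(B) differs from alpha_sigma only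
   through alpha_0 mu0(B) or alpha_0 mu0(Z \ B), and this set misses the window
   {-r+1, ..., r-1}, r = R_mu0(eps) < R, whose complement has mu0-mass < eps. *)

Lemma inv_pow2_pos (N : nat) : 0 < / 2 ^ N.
Proof. apply Rinv_0_lt_compat, pow_lt; lra. Qed.

Lemma inv_pow2_le_1 (N : nat) : / 2 ^ N <= 1.
Proof. rewrite <- Rinv_1. apply Rinv_le_contravar; [lra|]. apply pow_R1_Rle; lra. Qed.

Lemma inv_pow2_le (M N : nat) : (M <= N)%nat -> / 2 ^ N <= / 2 ^ M.
Proof. intro H. apply Rinv_le_contravar; [apply pow_lt; lra|]. apply Rle_pow; [lra|exact H]. Qed.

Lemma inv_pow2_S (N : nat) : / 2 ^ N = 2 * / 2 ^ S N.
Proof. simpl. field. apply pow_nonzero. lra. Qed.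

Lemma phi_succ_sub (k : Z) :
  phi (Fin (k + 1)) - phi (Fin k) = / 2 ^ Z.to_nat (Z.max (k + 1) (- k)).
Proof.
  unfold phi. destruct (Z.leb_spec 0 k) as [Hk|Hk].
  - rewrite (proj2 (Z.leb_le 0 (k + 1))) by lia.
    replace (Z.to_nat (Z.max (k + 1) (- k))) with (S (Z.to_nat k)) by lia.
    replace (Z.to_nat (k + 1)) with (S (Z.to_nat k)) by lia.
    rewrite (inv_pow2_S (Z.to_nat k)). lra.
  - destruct (Z.leb_spec 0 (k + 1)) as [Hk1|Hk1].
    + replace k with (-1)%Z by lia. simpl. field.
    + replace (Z.to_nat (Z.max (k + 1) (- k))) with (S (Z.to_nat (Z.abs (k + 1)))) by lia.
      replace (Z.to_nat (Z.abs k)) with (S (Z.to_nat (Z.abs (k + 1)))) by lia.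
      rewrite (inv_pow2_S (Z.to_nat (Z.abs (k + 1)))). lra.
Qed.

Lemma phi_lt_succ (k : Z) : phi (Fin k) < phi (Fin (k + 1)).
Proof.
  pose proof (phi_succ_sub k). pose proof (inv_pow2_pos (Z.to_nat (Z.max (k + 1) (- k)))). lra.
Qed.

Lemma phi_Fin_le (k k' : Z) : (k <= k')%Z -> phi (Fin k) <= phi (Fin k').
Proof.
  intro H. replace k' with (k + Z.of_nat (Z.to_nat (k' - k)))%Z by lia.
  induction (Z.to_nat (k' - k)) as [|d IH]; [rewrite Z.add_0_r; lra|].
  rewrite Nat2Z.inj_succ, <- Z.add_1_r, Z.add_assoc.
  pose proof (phi_lt_succ (k + Z.of_nat d)). lra.
Qed.

Lemma phi_Fin_bounds (k : Z) : -1 <= phi (Fin k) <= 1.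
Proof.
  unfold phi. destruct (Z.leb 0 k).
  - pose proof (inv_pow2_pos (Z.to_nat k)). pose proof (inv_pow2_le_1 (Z.to_nat k)). lra.
  - pose proof (inv_pow2_pos (Z.to_nat (Z.abs k))).
    pose proof (inv_pow2_le_1 (Z.to_nat (Z.abs k))). lra.
Qed.

Definition zbar_leb (h k : zbar) : bool :=
  match h, k with
  | NegInf, _ | _, PosInf => true
  | Fin x, Fin y => Z.leb x y
  | _, _ => false
  end.

Lemma phi_le_of_zbar_leb (h k : zbar) : zbar_leb h k = true -> phi h <= phi k.
Proof.
  destruct h as [|x|], k as [|y|]; intro H; try discriminate H; change (phi NegInf) with (-1);
    change (phi PosInf) with 1; try lra.
  - apply phi_Fin_bounds.
  - apply phi_Fin_le, Z.leb_le, H.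
  - apply phi_Fin_bounds.
Qed.

Lemma zbar_leb_pred (j : Z) (k : zbar) :
  zbar_leb (Fin j) k = false -> zbar_leb k (Fin (j - 1)) = true.
Proof.
  destruct k as [|z|]; simpl; try discriminate; auto.
  intro H. apply Z.leb_gt in H. apply Z.leb_le. lia.
Qed.

Lemma zbar_leb_succ (j : Z) (k : zbar) :
  zbar_leb k (Fin j) = false -> zbar_leb (Fin (j + 1)) k = true.
Proof.
  destruct k as [|z|]; simpl; try discriminate; auto.
  intro H. apply Z.leb_gt in H. apply Z.leb_le. lia.
Qed.

Lemma phi_gap_below (N : nat) (j : Z) (k : zbar) :
  (- Z.of_nat N < j <= Z.of_nat N)%Z -> zbar_leb (Fin j) k = false ->
  / 2 ^ N <= phi (Fin j) - phi k.
Proof.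
  intros Hj Hk.
  pose proof (phi_le_of_zbar_leb _ _ (zbar_leb_pred j k Hk)) as Hle.
  pose proof (phi_succ_sub (j - 1)) as Hgap. rewrite Z.sub_add in Hgap.
  pose proof (inv_pow2_le (Z.to_nat (Z.max j (- (j - 1)))) N ltac:(lia)). lra.
Qed.

Lemma phi_gap_above (N : nat) (j : Z) (k : zbar) :
  (- Z.of_nat N <= j < Z.of_nat N)%Z -> zbar_leb k (Fin j) = false ->
  / 2 ^ N <= phi k - phi (Fin j).
Proof.
  intros Hj Hk.
  pose proof (phi_le_of_zbar_leb _ _ (zbar_leb_succ j k Hk)) as Hle.
  pose proof (phi_succ_sub j) as Hgap.
  pose proof (inv_pow2_le (Z.to_nat (Z.max (j + 1) (- j))) N ltac:(lia)). lra.
Qed.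

Definition zbar_between (a b h : zbar) : bool := zbar_leb a h && zbar_leb h b.

Lemma zbar_between_separated (a b : zbar) (c : R) :
  (forall k, zbar_leb a k = false -> c <= phi a - phi k) ->
  (forall k, zbar_leb k b = false -> c <= phi k - phi b) ->
  forall h k, zbar_between a b h = true -> zbar_between a b k = false ->
  c <= Defs.dist h k.
Proof.
  unfold zbar_between, Defs.dist. intros Ha Hb h k Hh Hk.
  apply andb_true_iff in Hh as [Hah Hhb].
  apply phi_le_of_zbar_leb in Hah, Hhb.
  apply andb_false_iff in Hk as [Hk|Hk]; [apply Ha in Hk | apply Hb in Hk];
    unfold Rabs; destruct Rcase_abs; lra.
Qed.

Definition indicator {T : Type} (B : T -> bool) (x : T) : R := if B x then 1 else 0.

Lemma indicator_bounds {T : Type} (B : T -> bool) (x : T) : 0 <= indicator B x <= 1.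
Proof. unfold indicator. destruct (B x); lra. Qed.

Lemma admissible_scal (c : R) (f : zbar -> R) :
  Rabs c <= 1 -> admissible f -> admissible (fun h => c * f h).
Proof.
  intros Hc [Hlip Hbnd]. split.
  - intros h k. rewrite <- Rmult_minus_distr_l, Rabs_mult.
    pose proof (Rabs_pos c). pose proof (Rabs_pos (f h - f k)). specialize (Hlip h k). nra.
  - intro h. rewrite Rabs_mult.
    pose proof (Rabs_pos c). pose proof (Rabs_pos (f h)). specialize (Hbnd h). nra.
Qed.

Lemma admissible_scal_indicator (B : zbar -> bool) (c : R) :
  0 <= c <= 1 -> (forall h k, B h = true -> B k = false -> c <= Defs.dist h k) ->
  admissible (fun h => c * indicator B h).
Proof.
  intros Hc Hsep. unfold indicator. split; cbv beta.
  - intros h k. destruct (B h) eqn:Eh, (B k) eqn:Ek.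
    + rewrite Rminus_diag, Rabs_R0. apply Rabs_pos.
    + rewrite Rmult_0_r, Rmult_1_r, Rminus_0_r, Rabs_pos_eq by lra. exact (Hsep h k Eh Ek).
    + rewrite Rmult_0_r, Rmult_1_r, Rminus_0_l, Rabs_Ropp, Rabs_pos_eq by lra.
      unfold Defs.dist. rewrite Rabs_minus_sym. exact (Hsep k h Ek Eh).
    + rewrite Rminus_diag, Rabs_R0. apply Rabs_pos.
  - intro h. destruct (B h); rewrite Rabs_pos_eq; lra.
Qed.

Lemma int_ell_scal (w : list Z) (c : R) (f : zbar -> R) :
  int_ell w (fun h => c * f h) = c * int_ell w f.
Proof.
  unfold int_ell.
  assert (E : fold_right Rplus 0 (map (fun z => c * f (Fin z)) w) =
              c * fold_right Rplus 0 (map (fun z => f (Fin z)) w)).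
  { induction w as [|z w IH]; simpl; [ring | rewrite IH; ring]. }
  rewrite E. ring.
Qed.

Lemma int_ell_indicator (w : list Z) (B : zbar -> bool) :
  int_ell w (indicator B) = / INR (length w) * INR (length (filter (fun z => B (Fin z)) w)).
Proof.
  unfold int_ell. f_equal. unfold indicator.
  induction w as [|z w IH]; simpl; [reflexivity|].
  rewrite IH. destruct (B (Fin z)); simpl length; [rewrite S_INR|]; ring.
Qed.

Lemma int_Z_scal (p : Z -> R) (c : R) (g : Z -> R) :
  int_Z p (fun k => c * g k) = c * int_Z p g.
Proof.
  unfold int_Z. rewrite Rmult_plus_distr_l, <- !Series_scal_l.
  f_equal; apply Series_ext; intro i; unfold pos_part, neg_part; ring.
Qed.

Lemma int_mu_scal (am a0 ap : R) (p : Z -> R) (c : R) (f : zbar -> R) :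
  int_mu am a0 ap p (fun h => c * f h) = c * int_mu am a0 ap p f.
Proof. unfold int_mu. rewrite (int_Z_scal p c (fun k => f (Fin k))). ring. Qed.

Section EmpiricalBall.

Variables (n : nat) (am a0 ap : R) (p : Z -> R) (delta : R) (w : list Z).
Hypothesis Hw : Omega0_ball n am a0 ap p delta w.

Lemma int_ell_sub_int_mu_lt (f : zbar -> R) :
  admissible f -> int_ell w f - int_mu am a0 ap p f < delta.
Proof.
  intro Hf. destruct Hw as [_ Hlt]. unfold dual_norm in Hlt.
  set (E := fun x => exists f, admissible f /\ x = int_ell w f - int_mu am a0 ap p f) in Hlt.
  destruct (Lub_Rbar_correct E) as [Hub _].
  assert (Hx : Rbar_le (int_ell w f - int_mu am a0 ap p f) (Lub_Rbar E))
    by (apply Hub; exists f; auto).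
  destruct (Lub_Rbar E); simpl in *; try contradiction; lra.
Qed.

Lemma Rabs_int_ell_sub_int_mu_lt (f : zbar -> R) :
  admissible f -> Rabs (int_ell w f - int_mu am a0 ap p f) < delta.
Proof.
  intro Hf. apply Rabs_def1.
  - exact (int_ell_sub_int_mu_lt f Hf).
  - assert (Hopp : admissible (fun h => -1 * f h))
      by (apply admissible_scal; [rewrite Rabs_m1; lra | exact Hf]).
    pose proof (int_ell_sub_int_mu_lt _ Hopp) as H.
    rewrite int_ell_scal, int_mu_scal in H. lra.
Qed.

Lemma Rabs_count_sub_mass_lt (B : zbar -> bool) (c e : R) :
  0 < c <= 1 -> (forall h k, B h = true -> B k = false -> c <= Defs.dist h k) ->
  delta = c * e ->
  Rabs (INR (length (filter (fun z => B (Fin z)) w)) - int_mu am a0 ap p (indicator B) * INR n)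
    < e * INR n.
Proof.
  intros Hc Hsep Hdelta.
  pose proof Hw as [[Hlen [Hhd _]] _].
  assert (Hn : 0 < INR n).
  { apply lt_0_INR. destruct w; [discriminate Hhd | simpl in Hlen; lia]. }
  pose proof (Rabs_int_ell_sub_int_mu_lt _ (admissible_scal_indicator B c ltac:(lra) Hsep)) as H.
  rewrite int_ell_scal, int_mu_scal, int_ell_indicator, Hlen, Hdelta in H.
  set (N := INR (length (filter (fun z => B (Fin z)) w))) in *.
  set (M := int_mu am a0 ap p (indicator B)) in *.
  replace (c * (/ INR n * N) - c * M) with (c / INR n * (N - M * INR n)) in H by (field; lra).
  rewrite Rabs_mult, (Rabs_pos_eq (c / INR n)) in H by (apply Rlt_le, Rdiv_lt_0_compat; lra).
  apply (Rmult_lt_reg_l (c / INR n)); [apply Rdiv_lt_0_compat; lra|].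
  replace (c / INR n * (e * INR n)) with (c * e) by (field; lra). exact H.
Qed.

End EmpiricalBall.

Lemma Series_nonneg (a : nat -> R) : (forall i, 0 <= a i) -> ex_series a -> 0 <= Series a.
Proof.
  intros Ha Hex.
  replace 0 with (Series (fun i => 0 * a i)) by (rewrite Series_scal_l; ring).
  apply Series_le; [intro i; specialize (Ha i); lra | exact Hex].
Qed.

Lemma Series_tail_succ (a : nat -> R) (m : nat) : ex_series a ->
  Series (fun i => a (m + i)%nat) = a m + Series (fun i => a (S m + i)%nat).
Proof.
  intro Hex. rewrite Series_incr_1 by (apply ex_series_incr_n; exact Hex).
  rewrite Nat.add_0_r. f_equal. apply Series_ext. intro i. f_equal. lia.
Qed.

Lemma ex_series_mul_bounded (u v : nat -> R) :
  (forall i, 0 <= u i) -> (forall i, 0 <= v i <= 1) -> ex_series u ->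
  ex_series (fun i => u i * v i).
Proof.
  intros Hu Hv Hex. apply (@ex_series_le R_AbsRing R_CompleteNormedModule _ u); [|exact Hex].
  intro i. change (norm (u i * v i)) with (Rabs (u i * v i)).
  specialize (Hu i); specialize (Hv i). rewrite Rabs_pos_eq; nra.
Qed.

Lemma sum_seq_last (f : nat -> R) (a m : nat) :
  fold_right Rplus 0 (map f (seq a (S m))) = fold_right Rplus 0 (map f (seq a m)) + f (a + m)%nat.
Proof.
  rewrite seq_S, map_app, fold_right_app. simpl.
  induction (map f (seq a m)) as [|x l IH]; simpl; [ring | rewrite IH; ring].
Qed.

Lemma mass0_SS (q : Z -> R) (r : nat) :
  mass0 q (S (S r)) = q (- Z.of_nat (S r))%Z + mass0 q (S r) + q (Z.of_nat (S r)).
Proof.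
  unfold mass0.
  replace (2 * S (S r) - 1)%nat with (S (S (2 * S r - 1))) by lia.
  change (seq 0 (S ?m)) with (0%nat :: seq 1 m). cbn [map fold_right].
  rewrite <- seq_shift, map_map, sum_seq_last.
  replace (Z.of_nat 0 - Z.of_nat (S (S r)) + 1)%Z with (- Z.of_nat (S r))%Z by lia.
  replace (Z.of_nat (S (0 + (2 * S r - 1))) - Z.of_nat (S (S r)) + 1)%Z
    with (Z.of_nat (S r)) by lia.
  rewrite <- Rplus_assoc. do 3 f_equal. apply map_ext. intro i. f_equal. lia.
Qed.

Section WindowMass.

Variable q : Z -> R.
Hypotheses (Hq : forall k, 0 <= q k)
  (Hpos : ex_series (pos_part q)) (Hneg : ex_series (neg_part q)).

Lemma mass0_add_tails (s : nat) :
  mass0 q (S s) + Series (fun i => pos_part q (S s + i)) + Series (fun i => neg_part q (s + i))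
  = Series (pos_part q) + Series (neg_part q).
Proof.
  induction s as [|s IH].
  - change (Series (pos_part q)) with (Series (fun i => pos_part q (0 + i))).
    rewrite (Series_tail_succ (pos_part q) 0 Hpos).
    replace (mass0 q 1) with (pos_part q 0) by (unfold mass0, pos_part; simpl; ring).
    change (Series (fun i => neg_part q (0 + i))) with (Series (neg_part q)). ring.
  - rewrite (Series_tail_succ (pos_part q) (S s) Hpos),
      (Series_tail_succ (neg_part q) s Hneg) in IH.
    rewrite mass0_SS.
    unfold pos_part, neg_part in IH |- *. lra.
Qed.

Lemma mass0_le_Series (r : nat) : mass0 q r <= Series (pos_part q) + Series (neg_part q).
Proof.
  assert (Htail : forall (a : nat -> R) m, (forall i, 0 <= a i) -> ex_series a ->
            0 <= Series (fun i => a (m + i)%nat)).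
  { intros a m Ha Hex. apply Series_nonneg; [intro; apply Ha | apply ex_series_incr_n, Hex]. }
  destruct r as [|s].
  - unfold mass0. simpl.
    apply Rplus_le_le_0_compat; apply Series_nonneg; auto; intro; apply Hq.
  - rewrite <- (mass0_add_tails s).
    pose proof (Htail (pos_part q) (S s) (fun i => Hq _) Hpos).
    pose proof (Htail (neg_part q) s (fun i => Hq _) Hneg). lra.
Qed.

End WindowMass.

Section ProbabilityOnZ.

Variable p : Z -> R.
Hypothesis Hp : is_prob_Z p.

Lemma mul_indicator_nonneg (b : Z -> bool) (k : Z) : 0 <= p k * indicator b k.
Proof. destruct Hp as [Hnn _]. pose proof (indicator_bounds b k). specialize (Hnn k). nra. Qed.

Lemma ex_series_pos_part_indicator (b : Z -> bool) :
  ex_series (pos_part (fun k => p k * indicator b k)).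
Proof.
  destruct Hp as [Hnn [a [_ [Ha _]]]].
  apply (ex_series_mul_bounded (pos_part p) (pos_part (indicator b))).
  - intro; apply Hnn.
  - intro; apply indicator_bounds.
  - exists a; exact Ha.
Qed.

Lemma ex_series_neg_part_indicator (b : Z -> bool) :
  ex_series (neg_part (fun k => p k * indicator b k)).
Proof.
  destruct Hp as [Hnn [_ [a' [_ [Ha' _]]]]].
  apply (ex_series_mul_bounded (neg_part p) (neg_part (indicator b))).
  - intro; apply Hnn.
  - intro; apply indicator_bounds.
  - exists a'; exact Ha'.
Qed.

Lemma int_Z_indicator_nonneg (b : Z -> bool) : 0 <= int_Z p (indicator b).
Proof.
  unfold int_Z. apply Rplus_le_le_0_compat; apply Series_nonneg;
    auto using ex_series_pos_part_indicator, ex_series_neg_part_indicator;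
    intro; apply mul_indicator_nonneg.
Qed.

Lemma int_Z_indicator_add_negb (b : Z -> bool) :
  int_Z p (indicator b) + int_Z p (indicator (fun k => negb (b k))) = 1.
Proof.
  destruct Hp as [_ [a [a' [Ha [Ha' Hsum]]]]]. unfold int_Z.
  assert (Hpos : Series (pos_part (fun k => p k * indicator b k))
                 + Series (pos_part (fun k => p k * indicator (fun k => negb (b k)) k)) = a).
  { rewrite <- Series_plus by apply ex_series_pos_part_indicator.
    rewrite <- (is_series_unique _ _ Ha). apply Series_ext. intro i.
    unfold pos_part, indicator. destruct (b (Z.of_nat i)); simpl; ring. }
  assert (Hneg : Series (neg_part (fun k => p k * indicator b k))
                 + Series (neg_part (fun k => p k * indicator (fun k => negb (b k)) k)) = a').
  { rewrite <- Series_plus by apply ex_series_neg_part_indicator.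
    rewrite <- (is_series_unique _ _ Ha'). apply Series_ext. intro i.
    unfold neg_part, indicator. destruct (b (- Z.of_nat (S i))%Z); simpl; ring. }
  lra.
Qed.

Lemma mass0_le_int_Z_indicator (b : Z -> bool) (r : nat) :
  (forall k, (- Z.of_nat r < k < Z.of_nat r)%Z -> b k = true) ->
  mass0 p r <= int_Z p (indicator b).
Proof.
  intro Hb.
  replace (mass0 p r) with (mass0 (fun k => p k * indicator b k) r).
  - apply mass0_le_Series; auto using mul_indicator_nonneg,
      ex_series_pos_part_indicator, ex_series_neg_part_indicator.
  - unfold mass0. f_equal. apply map_ext_in. intros i Hi. apply in_seq in Hi.
    unfold indicator. rewrite Hb by lia. ring.
Qed.

Variables (eps : R) (r : nat).
Hypothesis Hmass : mass0 p r > 1 - eps.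

Lemma int_Z_indicator_lt (b : Z -> bool) :
  (forall k, (- Z.of_nat r < k < Z.of_nat r)%Z -> b k = false) ->
  int_Z p (indicator b) < eps.
Proof.
  intro Hb. pose proof (int_Z_indicator_add_negb b).
  assert (mass0 p r <= int_Z p (indicator (fun k => negb (b k)))); [|lra].
  apply mass0_le_int_Z_indicator. intros k Hk. rewrite Hb by exact Hk. reflexivity.
Qed.

Lemma int_Z_indicator_gt (b : Z -> bool) :
  (forall k, (- Z.of_nat r < k < Z.of_nat r)%Z -> b k = true) ->
  1 - eps < int_Z p (indicator b) <= 1.
Proof.
  intro Hb. pose proof (int_Z_indicator_add_negb b).
  pose proof (int_Z_indicator_nonneg (fun k => negb (b k))).
  pose proof (mass0_le_int_Z_indicator b r Hb). lra.
Qed.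

End ProbabilityOnZ.

Lemma Rabs_sub_mul_lt_add (N x y e e' m : R) :
  0 <= m -> Rabs (N - x * m) < e * m -> Rabs (x - y) < e' -> Rabs (N - y * m) < (e + e') * m.
Proof.
  intros Hm H Hxy. replace (N - y * m) with ((N - x * m) + (x - y) * m) by ring.
  eapply Rle_lt_trans; [apply Rabs_triang|]. rewrite Rabs_mult, (Rabs_pos_eq m) by exact Hm. nra.
Qed.

Section Counts.

Variables (am a0 ap : R) (p : Z -> R) (eps : R) (R0 r n : nat) (w : list Z).
Hypotheses (Ha0 : 0 <= a0 <= 1) (Hp : is_prob_Z p) (Hmass : mass0 p r > 1 - eps)
  (Hr : (r < R0)%nat) (Hw : Omega0_ball n am a0 ap p (/ 2 ^ R0 * eps) w).

Lemma Rabs_count_between_sub_mass_lt (a b : zbar) (c e : R) :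
  0 < c <= 1 -> / 2 ^ R0 * eps = c * e ->
  (forall k, zbar_leb a k = false -> c <= phi a - phi k) ->
  (forall k, zbar_leb k b = false -> c <= phi k - phi b) ->
  Rabs (INR (length (filter (fun z => zbar_between a b (Fin z)) w))
        - int_mu am a0 ap p (indicator (zbar_between a b)) * INR n) < e * INR n.
Proof.
  intros Hc He Ha Hb. apply (Rabs_count_sub_mass_lt n am a0 ap p _ w Hw _ c e); auto.
  apply zbar_between_separated; auto.
Qed.

Lemma cnt_minus_close : Rabs (INR (cnt_minus R0 w) - am * INR n) < 2 * eps * INR n.
Proof.
  set (b := fun k => Z.leb k (- Z.of_nat R0)).
  assert (H := Rabs_count_between_sub_mass_lt NegInf (Fin (- Z.of_nat R0)) (/ 2 ^ R0) eps
                 (conj (inv_pow2_pos R0) (inv_pow2_le_1 R0)) eq_refl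
                 ltac:(intros k Hk; discriminate Hk)
                 ltac:(intros k Hk; apply phi_gap_above; [lia | exact Hk])).
  change (length _) with (cnt_minus R0 w) in H.
  change (int_mu _ _ _ _ _) with (am * 1 + a0 * int_Z p (indicator b) + ap * 0) in H.
  pose proof (int_Z_indicator_nonneg p Hp b).
  pose proof (int_Z_indicator_lt p Hp eps r Hmass b ltac:(intros k Hk; apply Z.leb_gt; lia)).
  replace (2 * eps) with (eps + eps) by ring.
  apply (Rabs_sub_mul_lt_add _ _ _ _ _ _ (pos_INR n) H).
  rewrite Rabs_pos_eq; nra.
Qed.

Lemma cnt_zero_close : Rabs (INR (cnt_zero R0 w) - a0 * INR n) < 2 * eps * INR n.
Proof.
  set (b := fun k => andb (Z.leb (- Z.of_nat R0 + 1) k) (Z.leb k (Z.of_nat R0 - 1))).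
  assert (H := Rabs_count_between_sub_mass_lt (Fin (- Z.of_nat R0 + 1)) (Fin (Z.of_nat R0 - 1))
                 (/ 2 ^ R0) eps (conj (inv_pow2_pos R0) (inv_pow2_le_1 R0)) eq_refl
                 ltac:(intros k Hk; apply phi_gap_below; [lia | exact Hk])
                 ltac:(intros k Hk; apply phi_gap_above; [lia | exact Hk])).
  change (length _) with (cnt_zero R0 w) in H.
  change (int_mu _ _ _ _ _) with (am * 0 + a0 * int_Z p (indicator b) + ap * 0) in H.
  pose proof (int_Z_indicator_gt p Hp eps r Hmass b
                ltac:(intros k Hk; apply andb_true_iff; split; apply Z.leb_le; lia)).
  replace (2 * eps) with (eps + eps) by ring.
  apply (Rabs_sub_mul_lt_add _ _ _ _ _ _ (pos_INR n) H).
  rewrite Rabs_left1; nra.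
Qed.

Lemma cnt_plus_close : Rabs (INR (cnt_plus R0 w) - ap * INR n) < 2 * eps * INR n.
Proof.
  set (b := fun k => zbar_between (Fin (Z.of_nat R0)) PosInf (Fin k)).
  assert (H := Rabs_count_between_sub_mass_lt (Fin (Z.of_nat R0)) PosInf (/ 2 ^ R0) eps
                 (conj (inv_pow2_pos R0) (inv_pow2_le_1 R0)) eq_refl
                 ltac:(intros k Hk; apply phi_gap_below; [lia | exact Hk])
                 ltac:(intros [] Hk; discriminate Hk)).
  rewrite (filter_ext _ (fun z => Z.leb (Z.of_nat R0) z)) in H by (intro; apply andb_true_r).
  change (length _) with (cnt_plus R0 w) in H.
  change (int_mu _ _ _ _ _) with (am * 0 + a0 * int_Z p (indicator b) + ap * 1) in H.
  pose proof (int_Z_indicator_nonneg p Hp b).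
  pose proof (int_Z_indicator_lt p Hp eps r Hmass b
                ltac:(intros k Hk; apply andb_false_iff; left; apply Z.leb_gt; lia)).
  replace (2 * eps) with (eps + eps) by ring.
  apply (Rabs_sub_mul_lt_add _ _ _ _ _ _ (pos_INR n) H).
  rewrite Rabs_pos_eq; nra.
Qed.

Lemma cnt_m_lt (m : Z) : (Z.of_nat R0 - 1 <= Z.abs m <= Z.of_nat R0)%Z ->
  INR (cnt_m m w) < 3 * eps * INR n.
Proof.
  intro Hm. set (b := fun k => zbar_between (Fin m) (Fin m) (Fin k)).
  assert (H := Rabs_count_between_sub_mass_lt (Fin m) (Fin m) (/ 2 ^ S R0) (2 * eps)
                 (conj (inv_pow2_pos (S R0)) (inv_pow2_le_1 (S R0)))
                 ltac:(rewrite (inv_pow2_S R0); ring)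
                 ltac:(intros k Hk; apply phi_gap_below; [lia | exact Hk])
                 ltac:(intros k Hk; apply phi_gap_above; [lia | exact Hk])).
  rewrite (filter_ext _ (fun z => Z.eqb z m)) in H.
  2: { intro z. change (Z.leb m z && Z.leb z m = Z.eqb z m).
       destruct (Z.leb_spec m z), (Z.leb_spec z m), (Z.eqb_spec z m); try reflexivity; lia. }
  change (length _) with (cnt_m m w) in H.
  change (int_mu _ _ _ _ _) with (am * 0 + a0 * int_Z p (indicator b) + ap * 0) in H.
  pose proof (int_Z_indicator_lt p Hp eps r Hmass b
                ltac:(intros k Hk; apply andb_false_iff;
                      destruct (Z.ltb_spec k m); [left | right]; apply Z.leb_gt; lia)).
  pose proof (int_Z_indicator_nonneg p Hp b).
  apply (Rabs_sub_mul_lt_add _ _ 0 _ eps _ (pos_INR n)) in H;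
    [| rewrite Rminus_0_r, Rabs_pos_eq; nra].
  rewrite Rmult_0_l, Rminus_0_r in H. apply Rabs_def2 in H as [H _]. lra.
Qed.

End Counts.

Theorem lemma2p3 (am a0 ap : R) (p : Z -> R) (eps : R) (R0 : nat) :
  0 <= am -> 0 <= a0 -> 0 <= ap -> am + a0 + ap = 1 ->
  is_prob_Z p ->
  0 < eps ->
  (exists r, is_Rmu0 p eps r /\ (r < R0)%nat) ->
  forall (n : nat) (w : list Z),
    Omega0_ball n am a0 ap p (/ pow 2 R0 * eps) w ->
    Rabs (INR (cnt_minus R0 w) - am * INR n) < 2 * eps * INR n /\
    Rabs (INR (cnt_zero R0 w) - a0 * INR n) < 2 * eps * INR n /\
    Rabs (INR (cnt_plus R0 w) - ap * INR n) < 2 * eps * INR n /\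
    (forall m : Z,
       m = (- Z.of_nat R0)%Z \/ m = (- Z.of_nat R0 + 1)%Z \/
       m = (Z.of_nat R0 - 1)%Z \/ m = Z.of_nat R0 ->
       INR (cnt_m m w) < 3 * eps * INR n).
Proof.
  intros Ham Ha0 Hap Hsum Hp _ [r [[Hmass _] Hr]] n w Hw.
  assert (Ha0' : 0 <= a0 <= 1) by lra.
  split; [|split; [|split]].
  - exact (cnt_minus_close am a0 ap p eps R0 r n w Ha0' Hp Hmass Hr Hw).
  - exact (cnt_zero_close am a0 ap p eps R0 r n w Ha0' Hp Hmass Hr Hw).
  - exact (cnt_plus_close am a0 ap p eps R0 r n w Ha0' Hp Hmass Hr Hw).
  - intros m Hm. apply (cnt_m_lt am a0 ap p eps R0 r n w Ha0' Hp Hmass Hr Hw). lia.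
Qed.
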